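(* Assume hypothesis (A). For every $\gamma\in\mathbb{R}_+^d$ and every $1\le i\le d$, the function $f_i(x)=\exp(\overrightarrow{\gamma_i}\cdot x)$ satisfies $$\mathcal{L}f_i(x)=\frac{\gamma_i}{G_{ii}}\Bigl(\nu_i-\mathbf{1}_{\{x^i>0\}}\frac{\mu_i}{1+\gamma_i}\Bigr)f_i(x),\qquad x\in\mathbb{Z}_+^d.$$
   Context: Jackson network with $d$ queues: arrival rates $\lambda_i\ge0$, service rates $\mu_i>0$, routing matrix $P=(p_{ij})_{i,j=1}^d$ nonnegative with $p_{ii}=0$, $\sum_jp_{ij}\le1$, $p_{i0}=1-\sum_jp_{ij}$. With $\epsilon^i$ the unit vectors, $q(\epsilon^i)=\lambda_i$, $q(-\epsilon^i)=\mu_ip_{i0}$, $q(\epsilon^j-\epsilon^i)=\mu_ip_{ij}$, $q=0$ otherwise; the process on $\mathbb{Z}_+^d$ has generator $\mathcal{L}f(y)=\sum_{z\in\mathbb{Z}_+^d}q(z-y)(f(z)-f(y))$. Hypothesis (A): $(q(x-y))_{x,y\in\mathbb{Z}^d}$ irreducible (equivalently spectral radius of $P$ $<1$ and for every $i$ some $\lambda_jp^{(n)}_{ji}>0$); then the traffic equations $\nu_j=\lambda_j+\sum_i\nu_ip_{ij}$ have a unique solution. $G=(I-P)^{-1}$. $Q_{ij}$: probability that the chain on $\{0,\dots,d\}$ with transitions $p_{ij}$ ($0$ absorbing) started at $i$ ever visits $j$ (time $0$ included). For $\gamma\in\mathbb{R}_+^d$, $\overrightarrow{\gamma_i}=(\gamma_i^1,\dots,\gamma_i^d)$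 with $\gamma_i^j=\log(1+Q_{ji}\gamma_i)$. *)

From HB Require Import structures.
From mathcomp Require Import all_boot all_order all_algebra.
From mathcomp Require Import all_classical all_reals all_analysis.
From Stdlib Require Import Relations.
Import numFieldNormedType.Exports.
Set Implicit Arguments. Unset Strict Implicit. Unset Printing Implicit Defensive.
Import Order.TTheory GRing.Theory Num.Theory.
Local Open Scope ring_scope.
Local Open Scope classical_set_scope.

(* Points of Z^d and of Z_+^d (queues indexed by 'I_d = {0,..,d-1}). *)
Definition Zvec (d : nat) := {ffun 'I_d -> int}.
Definition Nvec (d : nat) := {ffun 'I_d -> nat}.

Definition unitv (d : nat) (i : 'I_d) : Zvec d := [ffun k => if k == i then 1 else 0].

Definition toZ (d : nat) (x : Nvec d) : Zvec d := [ffun k => (x k)%:Z].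

Definition p0 (R : realType) (d : nat) (P : 'M[R]_d) (i : 'I_d) : R :=
  1 - \sum_(j < d) P i j.

(* the jump rates q : Z^d -> R:
   q(eps^i) = lam_i, q(-eps^i) = mu_i p_i0, q(eps^j - eps^i) = mu_i p_ij (i <> j),
   q = 0 otherwise *)
Definition qrate (R : realType) (d : nat) (lam mu : 'I_d -> R) (P : 'M[R]_d)
    (v : Zvec d) : R :=
  if [pick i | v == unitv i] is Some i then lam i
  else if [pick i | v == - unitv i] is Some i then mu i * p0 P i
  else if [pick ij : 'I_d * 'I_d | (ij.1 != ij.2) && (v == unitv ij.2 - unitv ij.1)]
       is Some ij then mu ij.1 * P ij.1 ij.2
  else 0.

Definition irreducibleZ (R : realType) (d : nat) (q : Zvec d -> R) : Prop :=
  forall x y : Zvec d, clos_refl_trans (Zvec d) (fun a b => 0 < q (a - b)) x y.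

Definition gen (R : realType) (d : nat) (q : Zvec d -> R) (f : Nvec d -> R)
    (y : Nvec d) : R :=
  \sum_(z \in [set: Nvec d]) q (toZ z - toZ y) * (f z - f y).

(* Transition matrix of the chain on {0,...,d}: state 0 (= ord0) is absorbing,
   queue i corresponds to state lift ord0 i (value i+1). *)
Definition Pext (R : realType) (d : nat) (P : 'M[R]_d) : 'M[R]_d.+1 :=
  \matrix_(a, b)
    match unlift ord0 a, unlift ord0 b with
    | None, None => 1
    | None, Some _ => 0
    | Some i, None => p0 P i
    | Some i, Some j => P i j
    end.

Definition visit_prob (R : realType) (d : nat) (P : 'M[R]_d) (n : nat)
    (a b : 'I_d.+1) : R :=
  \sum_(s : n.-tuple 'I_d.+1)
     (\prod_(m < n) Pext P (nth a (a :: s) m) (nth a (a :: s) m.+1)) *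
     (b \in a :: s)%:R.

(* Q_ij : probability that the chain started at i ever visits j (time 0 included)
   = limit of the (nondecreasing) finite-horizon probabilities. *)
Definition Qhit (R : realType) (d : nat) (P : 'M[R]_d) (i j : 'I_d) : R :=
  limn ((fun n => visit_prob P n (lift ord0 i) (lift ord0 j)) : R^nat).

Definition Gmx (R : realType) (d : nat) (P : 'M[R]_d) : 'M[R]_d :=
  invmx (1%:M - P).

Definition gvec (R : realType) (d : nat) (P : 'M[R]_d) (gamma : 'I_d -> R)
    (i : 'I_d) : 'I_d -> R :=
  fun j => ln (1 + Qhit P j i * gamma i).

Definition fexp (R : realType) (d : nat) (v : 'I_d -> R) (x : Nvec d) : R :=
  expR (\sum_(j < d) v j * (x j)%:R).

From HB Require Import structures.
From mathcomp Require Import all_boot all_order all_algebra.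
From mathcomp Require Import all_classical all_reals all_analysis.
From mathcomp Require Import zify finmap ring.
From Stdlib Require Import Relations.
Import numFieldNormedType.Exports.
Import Order.TTheory GRing.Theory Num.Theory.
Local Open Scope ring_scope.
Set Implicit Arguments. Unset Strict Implicit.

(* Write w k for the probability Q_ki of ever reaching queue i from queue k, and
   c for gamma_i, so that exp(gamma_i^k) = 1 + c w k.  An arrival at k multiplies
   f_i by 1 + c w k; a departure from j followed by routing multiplies it, on
   average over the destination, by 1 + c (sum_k P_jk w k - w j) / (1 + c w j).
   Since w is P-harmonic away from i, only departures from i contribute, and
   the traffic equations turn the arrival term into c nu_i (1 - sum_k P_ik w k).
   The escape probability 1 - sum_k P_ik w k is 1 / G_ii because (I - P) w is
   supported on i.  Hypothesis (A) enters only to make I - P invertible: if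
   v = P v with v <> 0, the queues where |v| is maximal form a set that
   customers can never leave, which irreducibility forbids. *)

Lemma big_tuple_cons (R : nmodType) (T : finType) n (F : n.+1.-tuple T -> R) :
  \sum_(s : n.+1.-tuple T) F s = \sum_(c : T) \sum_(s : n.-tuple T) F [tuple of c :: s].
Proof.
rewrite pair_big (reindex (fun p : T * n.-tuple T => [tuple of p.1 :: p.2])) /=.
  by apply: eq_bigr => -[c s].
exists (fun s : n.+1.-tuple T => (thead s, [tuple of behead s])).
  by move=> [c s] _ /=; congr pair; apply: val_inj.
by move=> s _; apply: val_inj; case: s => -[|x s].
Qed.

Lemma big_tuple0 (R : nmodType) (T : finType) (F : 0.-tuple T -> R) :
  \sum_(s : 0.-tuple T) F s = F [tuple].
Proof.
rewrite (eq_bigl (pred1 [tuple])) ?big_pred1_eq // => s.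
by apply/esym/eqP/tuple0.
Qed.

Section HittingProbabilities.
Variables (R : realType) (d : nat) (P : 'M[R]_d).

Lemma Pext_lift i j : Pext P (lift ord0 i) (lift ord0 j) = P i j.
Proof. by rewrite /Pext mxE !liftK. Qed.

Lemma Pext_lift_ord0 i : Pext P (lift ord0 i) ord0 = p0 P i.
Proof. by rewrite /Pext mxE liftK unlift_none. Qed.

Lemma Pext_ord0 b : Pext P ord0 b = (b == ord0)%:R.
Proof.
rewrite /Pext mxE unlift_none; case: (unliftP ord0 b) => [j ->|->].
  by rewrite eq_sym (negbTE (neq_lift _ _)).
by rewrite eqxx.
Qed.

Lemma Pext_row_sum a : \sum_b Pext P a b = 1.
Proof.
rewrite big_ord_recl; case: (unliftP ord0 a) => [i ->|->].
  rewrite Pext_lift_ord0; under eq_bigr do rewrite Pext_lift.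
  by rewrite /p0 subrK.
rewrite Pext_ord0 eqxx big1 ?addr0 // => j _.
by rewrite Pext_ord0 eq_sym (negbTE (neq_lift _ _)).
Qed.

Definition path_weight n (a : 'I_d.+1) (s : seq 'I_d.+1) : R :=
  \prod_(m < n) Pext P (nth a (a :: s) m) (nth a (a :: s) m.+1).

Lemma path_weight_cons n a c (s : seq 'I_d.+1) :
  size s = n -> path_weight n.+1 a (c :: s) = Pext P a c * path_weight n c s.
Proof.
move=> hs; rewrite /path_weight big_ord_recl /=; congr (_ * _).
apply: eq_bigr => m _ /=; rewrite add0n.
rewrite (set_nth_default c a) /=; last by rewrite ltnS hs ltnW.
by rewrite (set_nth_default c a) // hs.
Qed.

Lemma path_weight_sum n a : \sum_(s : n.-tuple 'I_d.+1) path_weight n a s = 1.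
Proof.
elim: n a => [|n IH] a; first by rewrite big_tuple0 /path_weight big_ord0.
rewrite big_tuple_cons -[RHS](Pext_row_sum a); apply: eq_bigr => c _.
under eq_bigr do rewrite path_weight_cons ?size_tuple //.
by rewrite -mulr_sumr IH mulr1.
Qed.

Lemma visit_prob0 a b : visit_prob P 0 a b = (b == a)%:R.
Proof. by rewrite /visit_prob big_tuple0 big_ord0 mul1r /= inE. Qed.

Lemma visit_probS n a b :
  visit_prob P n.+1 a b =
  if b == a then 1 else \sum_c Pext P a c * visit_prob P n c b.
Proof.
rewrite /visit_prob big_tuple_cons.
under eq_bigr do under eq_bigr do
  rewrite -[\prod_(m < n.+1) _]/(path_weight n.+1 a _) path_weight_cons ?size_tuple //.
case: eqP => [->|/eqP ba].
  under eq_bigr do under eq_bigr do rewrite inE eqxx mulr1.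
  rewrite -[RHS](Pext_row_sum a); apply: eq_bigr => c _.
  by rewrite -mulr_sumr path_weight_sum mulr1.
apply: eq_bigr => c _; rewrite mulr_sumr; apply: eq_bigr => s _.
by rewrite inE (negbTE ba) mulrA.
Qed.

Definition hit_prob (a b : 'I_d.+1) : R := limn ((fun n => visit_prob P n a b) : R^nat).

Lemma hit_prob_refl a : hit_prob a a = 1.
Proof.
rewrite /hit_prob (_ : (fun n => _) = fun=> 1) ?lim_cst //.
by apply: funext => -[|n]; rewrite ?visit_prob0 ?visit_probS eqxx.
Qed.

Lemma hit_prob_ord0 j : hit_prob ord0 (lift ord0 j) = 0.
Proof.
rewrite /hit_prob (_ : (fun n => _) = fun=> 0) ?lim_cst //.
apply: funext; elim=> [|n IH]; rewrite ?visit_prob0 ?visit_probS;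
  rewrite eq_sym (negbTE (neq_lift _ _)) //.
rewrite big_ord_recl Pext_ord0 eqxx mul1r IH add0r big1 // => c _.
by rewrite Pext_ord0 eq_sym (negbTE (neq_lift _ _)) mul0r.
Qed.

Hypotheses (P_ge0 : forall i j, 0 <= P i j) (P_substoch : forall i, \sum_j P i j <= 1).

Lemma Pext_ge0 a b : 0 <= Pext P a b.
Proof.
case: (unliftP ord0 a) => [i ->|->]; last by rewrite Pext_ord0 ler0n.
case: (unliftP ord0 b) => [j ->|->]; first by rewrite Pext_lift.
by rewrite Pext_lift_ord0 /p0 subr_ge0.
Qed.

Lemma visit_prob_ge0 n a b : 0 <= visit_prob P n a b.
Proof.
elim: n a => [|n IH] a; first by rewrite visit_prob0.
rewrite visit_probS; case: eqP => // _.
by apply: sumr_ge0 => c _; rewrite mulr_ge0 ?Pext_ge0.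
Qed.

Lemma visit_prob_le1 n a b : visit_prob P n a b <= 1.
Proof.
elim: n a => [|n IH] a; first by rewrite visit_prob0 lern1 leq_b1.
rewrite visit_probS; case: eqP => // _.
rewrite -(Pext_row_sum a); apply: ler_sum => c _.
by rewrite ler_piMr ?Pext_ge0.
Qed.

Lemma visit_prob_nondecreasing a b :
  nondecreasing_seq ((fun n => visit_prob P n a b) : R^nat).
Proof.
apply/nondecreasing_seqP => n; elim: n a => [|n IH] a.
  by rewrite visit_probS visit_prob0; case: eqP => // _; rewrite sumr_ge0 // => c _;
    rewrite mulr_ge0 ?Pext_ge0 ?visit_prob_ge0.
rewrite (visit_probS n.+1) visit_probS; case: eqP => // _.
by apply: ler_sum => c _; rewrite ler_wpM2l ?Pext_ge0.
Qed.

Lemma visit_prob_cvg a b : cvgn ((fun n => visit_prob P n a b) : R^nat).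
Proof.
apply: nondecreasing_is_cvgn; first exact: visit_prob_nondecreasing.
by exists 1 => _ [n _ <-]; exact: visit_prob_le1.
Qed.

Lemma hit_prob_ge0 a b : 0 <= hit_prob a b.
Proof. by apply: limr_ge; [exact: visit_prob_cvg | apply: nearW => n; exact: visit_prob_ge0]. Qed.

Lemma hit_prob_harmonic a b :
  b != a -> hit_prob a b = \sum_c Pext P a c * hit_prob c b.
Proof.
move=> ba; apply: cvg_lim => //; rewrite -cvg_shiftS /=.
have -> : (fun n => visit_prob P n.+1 a b) =
          (fun n => \sum_c Pext P a c * visit_prob P n c b).
  by apply: funext => n; rewrite visit_probS (negbTE ba).
apply: (@cvg_big _ _ +%R 0 xpredT add_continuous) => // c _.
by apply: cvgMl_tmp; exact: visit_prob_cvg.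
Qed.

Lemma Qhit_refl i : Qhit P i i = 1.
Proof. exact: hit_prob_refl. Qed.

Lemma Qhit_ge0 i j : 0 <= Qhit P i j.
Proof. exact: hit_prob_ge0. Qed.

Lemma Qhit_harmonic i j :
  j != i -> Qhit P j i = \sum_k P j k * Qhit P k i.
Proof.
move=> ji; rewrite /Qhit -/(hit_prob _ _) hit_prob_harmonic; last first.
  by rewrite (inj_eq lift_inj) eq_sym.
rewrite big_ord_recl Pext_lift_ord0 hit_prob_ord0 mulr0 add0r.
by under eq_bigr do rewrite Pext_lift.
Qed.

End HittingProbabilities.

Section Invertibility.
Variables (R : realType) (d : nat) (P : 'M[R]_d).

Definition trapping (S : pred 'I_d) : Prop :=
  (forall j, S j -> p0 P j = 0) /\ (forall j k, S j -> P j k != 0 -> S k).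

Lemma unitvE (i k : 'I_d) : unitv i k = (k == i)%:Z.
Proof. by rewrite ffunE; case: (k == i). Qed.

Definition coord_sum (S : pred 'I_d) (v : Zvec d) : int := \sum_(k | S k) v k.

Lemma coord_sumB S (a b : Zvec d) : coord_sum S (a - b) = coord_sum S a - coord_sum S b.
Proof. by rewrite /coord_sum -sumrB; apply: eq_bigr => k _; rewrite !ffunE. Qed.

Lemma coord_sum0 S : coord_sum S 0 = 0.
Proof. by rewrite /coord_sum big1 // => k _; rewrite ffunE. Qed.

Lemma coord_sum_unitv S i : coord_sum S (unitv i) = (S i)%:Z.
Proof.
rewrite /coord_sum; under eq_bigr do rewrite unitvE.
case: (boolP (S i)) => Si; last first.
  by rewrite big1 // => k Sk; case: eqP => // ki; rewrite -ki Sk in Si.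
rewrite (bigD1 i) //= eqxx big1 ?addr0 // => k /andP[_ /negbTE ->] //.
Qed.

Variables lam mu : 'I_d -> R.

Lemma coord_sum_jump_ge0 S v :
  trapping S -> 0 < qrate lam mu P v -> 0 <= coord_sum S v.
Proof.
move=> [S_p0 S_closed]; rewrite /qrate.
case: pickP => [i /eqP -> _|_]; first by rewrite coord_sum_unitv.
case: pickP => [i /eqP -> q_gt0|_].
  rewrite -sub0r coord_sumB coord_sum0 coord_sum_unitv sub0r.
  by case: (boolP (S i)) => // Si; rewrite S_p0 // mulr0 ltxx in q_gt0.
case: pickP => [[j k] /andP [/= _ /eqP ->] q_gt0|_]; last by rewrite ltxx.
rewrite coord_sumB !coord_sum_unitv.
case: (boolP (S j)) => Sj; last by rewrite subr0.
have /(S_closed _ _ Sj) -> : P j k != 0 by apply: contraTneq q_gt0 => ->; rewrite mulr0 ltxx.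
by rewrite subrr.
Qed.

Lemma irreducible_no_trapping S j :
  irreducibleZ (qrate lam mu P) -> trapping S -> ~~ S j.
Proof.
move=> irr trapS; apply/negP => Sj.
have coord_sum_nonincr x y : clos_refl_trans (Zvec d) (fun a b => 0 < qrate lam mu P (a - b)) x y ->
    coord_sum S y <= coord_sum S x.
  elim=> // [a b ab|a b c _ le_ba _ le_cb]; last exact: le_trans le_cb le_ba.
  by rewrite -subr_ge0 -coord_sumB; exact: coord_sum_jump_ge0.
by have := coord_sum_nonincr _ _ (irr 0 (unitv j)); rewrite coord_sum_unitv Sj coord_sum0.
Qed.

Hypotheses (P_ge0 : forall i j, 0 <= P i j) (P_substoch : forall i, \sum_j P i j <= 1).

Lemma argmax_norm_trapping (v : 'I_d -> R) (M : R) :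
  (forall j, v j = \sum_k P j k * v k) -> 0 < M -> (forall k, `|v k| <= M) ->
  trapping (fun k => `|v k| == M).
Proof.
move=> v_harm M_gt0 v_le.
suff rows k : `|v k| = M -> \sum_l P k l = 1 /\ forall l, P k l != 0 -> `|v l| = M.
  split=> [k /eqP/rows[rk _]|k l /eqP/rows[_ h] /h ->]; last by [].
  by rewrite /p0 rk subrr.
move=> vk.
have lo : M <= \sum_l P k l * `|v l|.
  rewrite -vk v_harm; apply: le_trans (ler_norm_sum _ _ _) _.
  by apply: ler_sum => l _; rewrite normrM ger0_norm.
have up : \sum_l P k l * `|v l| <= (\sum_l P k l) * M.
  by rewrite mulr_suml; apply: ler_sum => l _; rewrite ler_wpM2l.
have rk : \sum_l P k l = 1.
  apply/eqP; rewrite eq_le P_substoch /=.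
  by rewrite -(ler_pM2r M_gt0) mul1r (le_trans lo up).
split=> // l Pkl.
have gap : \sum_l P k l * (M - `|v l|) = 0.
  under eq_bigr do rewrite mulrBr.
  rewrite sumrB -mulr_suml rk mul1r; apply/eqP; rewrite subr_eq0 eq_le lo /=.
  by rewrite -[leRHS]mul1r -rk.
have /(_ l isT)/eqP : forall l, xpredT l -> P k l * (M - `|v l|) = 0.
  by apply: psumr_eq0P gap => l' _; rewrite mulr_ge0 // subr_ge0.
by rewrite mulf_eq0 (negbTE Pkl) subr_eq0 => /eqP <-.
Qed.

Lemma harmonic_eq0 (v : 'I_d -> R) :
  irreducibleZ (qrate lam mu P) ->
  (forall j, v j = \sum_k P j k * v k) -> forall j, v j = 0.
Proof.
move=> irr v_harm j.
have [jm _ v_le] := @arg_maxP _ _ _ j xpredT (fun k => `|v k|) isT.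
have [M0|M_neq0] := eqVneq `|v jm| 0.
  by apply/eqP; rewrite -normr_eq0 eq_le normr_ge0 andbT -M0; exact: v_le.
have M_gt0 : 0 < `|v jm| by rewrite lt_def M_neq0 normr_ge0.
have trap := argmax_norm_trapping v_harm M_gt0 (fun k => v_le k isT).
by have := irreducible_no_trapping jm irr trap; rewrite /= eqxx.
Qed.

Lemma unitmx_IsubP : irreducibleZ (qrate lam mu P) -> (1%:M - P) \in unitmx.
Proof.
move=> irr; rewrite -unitmx_tr -row_free_unit -kermx_eq0.
apply/rowV0P => v /sub_kermxP vK; apply/rowP => j; rewrite mxE.
apply: (harmonic_eq0 (v := fun k => v 0 k)) irr _ j => k.
move/rowP: vK => /(_ k).
rewrite linearB /= trmx1 mulmxBr mulmx1 !mxE => /eqP; rewrite subr_eq0 => /eqP ->.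
by apply: eq_bigr => l _; rewrite mxE mulrC.
Qed.

End Invertibility.

Lemma sum_fset_point_masses (R : realType) (T : choiceType) (I : finType)
    {A : {fset T}} {a : I -> R} {c : I -> T} {H : T -> R} :
  (forall m, c m \in A) ->
  \sum_(z <- A) (\sum_m a m * (z == c m)%:R) * H z = \sum_m a m * H (c m).
Proof.
move=> c_in; under eq_bigr do rewrite mulr_suml.
rewrite exchange_big; apply: eq_bigr => m _.
rewrite (bigD1_seq (c m)) ?fset_uniq //= eqxx mulr1 big1 ?addr0 // => z /negbTE ->.
by rewrite mulr0 mul0r.
Qed.

Section Generator.
Variables (R : realType) (d : nat).

Lemma unitv_eq (i k : 'I_d) : (unitv k == unitv i) = (k == i).
Proof.
apply/eqP/eqP => [/ffunP/(_ k)|->//]; rewrite !ffunE eqxx.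
by case: eqP.
Qed.

Lemma unitv_neqN (i k : 'I_d) : (unitv k == - unitv i) = false.
Proof. by apply/eqP => /ffunP/(_ k); rewrite !ffunE eqxx; case: (k == i). Qed.

Lemma unitv_neqB (i j k : 'I_d) : j != k -> (unitv i == unitv k - unitv j) = false.
Proof.
move=> jk; apply/eqP => /ffunP/(_ j); rewrite !ffunE eqxx (negbTE jk).
by case: (j == i).
Qed.

Lemma unitvN_neqB (i j k : 'I_d) : j != k -> (- unitv i == unitv k - unitv j) = false.
Proof.
move=> jk; apply/eqP => /ffunP/(_ k).
rewrite !ffunE eqxx (eq_sym k j) (negbTE jk).
by case: (k == i).
Qed.

Lemma unitvB_eq (j k j' k' : 'I_d) : j != k -> j' != k' ->
  (unitv k' - unitv j' == unitv k - unitv j) = (j' == j) && (k' == k).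
Proof.
move=> jk jk'; apply/eqP/andP => [/ffunP h|[/eqP-> /eqP->]//].
have := h k; have := h j; rewrite !ffunE !eqxx (negbTE jk) (eq_sym k j) (negbTE jk).
case: (eqVneq j j') => [<-|jj']; case: (eqVneq k k') => [<-|kk'] //; rewrite ?eqxx //=.
all: by case: (_ == _); case: (_ == _).
Qed.

Variables (lam mu : 'I_d -> R) (P : 'M[R]_d).
Hypothesis P_diag0 : forall i, P i i = 0.

Definition move_rate (v : Zvec d) : R :=
  \sum_j \sum_k mu j * P j k * (v == unitv k - unitv j)%:R.

Lemma move_rate0 (v : Zvec d) :
  (forall j k, j != k -> (v == unitv k - unitv j) = false) -> move_rate v = 0.
Proof.
move=> v_neq; apply: big1 => j _; apply: big1 => k _.
have [->|jk] := eqVneq j k; first by rewrite P_diag0 mulr0 mul0r.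
by rewrite v_neq // mulr0.
Qed.

Lemma qrate_indicator (v : Zvec d) : qrate lam mu P v =
  \sum_k lam k * (v == unitv k)%:R +
  (\sum_j mu j * p0 P j * (v == - unitv j)%:R + move_rate v).
Proof.
rewrite /qrate.
case: pickP => [i /eqP -> | not_arrival].
  rewrite (bigD1 i) //= eqxx mulr1 big1 => [|k ki]; last first.
    by rewrite unitv_eq eq_sym (negbTE ki) mulr0.
  rewrite big1 => [|j _]; last by rewrite unitv_neqN mulr0.
  by rewrite move_rate0 ?addr0 // => j k; exact: unitv_neqB.
case: pickP => [i /eqP -> | not_departure].
  rewrite big1 => [|k _]; last by rewrite eq_sym unitv_neqN mulr0.
  rewrite (bigD1 i) //= eqxx mulr1 big1 => [|j ji]; last first.
    by rewrite eqr_opp unitv_eq eq_sym (negbTE ji) mulr0.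
  by rewrite move_rate0 ?addr0 ?add0r // => j k; exact: unitvN_neqB.
case: pickP => [[j k] /andP [/= jk /eqP ->] | not_move].
  rewrite big1 => [|k' _]; last by rewrite eq_sym unitv_neqB // mulr0.
  rewrite big1 => [|j' _]; last by rewrite eq_sym unitvN_neqB // mulr0.
  rewrite /move_rate pair_big (bigD1 (j, k)) //= eqxx mulr1 big1 ?addr0 ?add0r // => -[j' k'] /= ne.
  have [->|jk'] := eqVneq j' k'; first by rewrite P_diag0 mulr0 mul0r.
  by move: ne; rewrite unitvB_eq // xpair_eqE (eq_sym j') (eq_sym k') => /negbTE ->; rewrite mulr0.
rewrite big1 => [|k _]; last by rewrite not_arrival mulr0.
rewrite big1 => [|j _]; last by rewrite not_departure mulr0.
by rewrite move_rate0 ?addr0 // => j k jk; have := not_move (j, k); rewrite /= jk.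
Qed.

(* [decv y j] is meaningful only when [0 < y j] (truncated subtraction). *)
Definition incv (y : Nvec d) k : Nvec d := [ffun l => (y l + (l == k))%N].
Definition decv (y : Nvec d) j : Nvec d := [ffun l => (y l - (l == j))%N].

Lemma toZ_subE_unitv (y z : Nvec d) k : (toZ z - toZ y == unitv k) = (z == incv y k).
Proof.
apply/eqP/eqP => [/ffunP h|->]; apply/ffunP => l.
  by have := h l; rewrite !ffunE; case: (l == k) => /=; lia.
by rewrite !ffunE; case: (l == k) => /=; lia.
Qed.

Lemma toZ_subE_Nunitv (y z : Nvec d) j :
  (toZ z - toZ y == - unitv j) = (z == decv y j) && (0 < y j)%N.
Proof.
apply/eqP/andP => [/ffunP h|[/eqP -> y_gt0]].
  split; last by have := h j; rewrite !ffunE eqxx /=; lia.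
  by apply/eqP/ffunP => l; have := h l; rewrite !ffunE; case: (l == j) => /=; lia.
by apply/ffunP => l; rewrite !ffunE; case: (eqVneq l j) => [->|] /=; lia.
Qed.

Lemma toZ_subE_unitvB (y z : Nvec d) j k : j != k ->
  (toZ z - toZ y == unitv k - unitv j) = (z == incv (decv y j) k) && (0 < y j)%N.
Proof.
move=> jk; apply/eqP/andP => [/ffunP h|[/eqP -> y_gt0]].
  split; last by have := h j; rewrite !ffunE eqxx (negbTE jk) /=; lia.
  apply/eqP/ffunP => l; have := h l; rewrite !ffunE.
  by case: (eqVneq l j) => [->|] /=; [rewrite (negbTE jk) /=|case: (l == k) => /=]; lia.
apply/ffunP => l; rewrite !ffunE.
by case: (eqVneq l j) => [->|] /=; [rewrite (negbTE jk) /=|case: (l == k) => /=]; lia.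
Qed.

Lemma qrate_jump (y z : Nvec d) : qrate lam mu P (toZ z - toZ y) =
  \sum_k lam k * (z == incv y k)%:R +
  (\sum_j (mu j * p0 P j * (0 < y j)%N%:R) * (z == decv y j)%:R +
   \sum_(p : 'I_d * 'I_d) (mu p.1 * P p.1 p.2 * (0 < y p.1)%N%:R) *
                          (z == incv (decv y p.1) p.2)%:R).
Proof.
rewrite qrate_indicator; congr (_ + (_ + _)).
- by apply: eq_bigr => k _; rewrite toZ_subE_unitv.
- apply: eq_bigr => j _; rewrite toZ_subE_Nunitv.
  by case: (0 < y j)%N; rewrite /= ?andbT ?andbF ?mulr1 ?mulr0 ?mul0r.
rewrite /move_rate pair_big; apply: eq_bigr => -[j k] _ /=.
have [->|jk] := eqVneq j k; first by rewrite P_diag0 !mulr0 !mul0r.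
rewrite toZ_subE_unitvB //.
by case: (0 < y j)%N; rewrite /= ?andbT ?andbF ?mulr1 ?mulr0 ?mul0r.
Qed.

Lemma gen_qrate (f : Nvec d -> R) (y : Nvec d) :
  gen (qrate lam mu P) f y =
  \sum_k lam k * (f (incv y k) - f y) +
  \sum_j (0 < y j)%N%:R * mu j * (p0 P j * (f (decv y j) - f y) +
                                 \sum_k P j k * (f (incv (decv y j) k) - f y)).
Proof.
pose A := seq_fset tt ([seq incv y k | k <- enum 'I_d] ++ [seq decv y j | j <- enum 'I_d] ++
   [seq incv (decv y p.1) p.2 | p <- index_enum ('I_d * 'I_d)%type]).
have inc_in k : incv y k \in A by rewrite seq_fsetE mem_cat map_f ?mem_enum.
have dec_in j : decv y j \in A by rewrite seq_fsetE !mem_cat map_f ?mem_enum ?orbT.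
have move_in p : incv (decv y p.1) p.2 \in A.
  by rewrite seq_fsetE !mem_cat (map_f (fun p => incv (decv y p.1) p.2)) ?mem_index_enum ?orbT.
rewrite /gen (fsbigTE A) => [|z zA]; last first.
  have z_neq c : c \in A -> (z == c)%:R = 0 :> R.
    by move=> cA; case: eqP => // zc; rewrite zc cA in zA.
  rewrite qrate_jump !big1 ?addr0 ?mul0r // => [p|j|k] _; by rewrite z_neq ?mulr0.
under eq_bigr do rewrite qrate_jump !mulrDl.
rewrite !big_split /= (sum_fset_point_masses inc_in) (sum_fset_point_masses dec_in).
rewrite (sum_fset_point_masses move_in).
rewrite -(pair_big xpredT xpredT (fun j k =>
  mu j * P j k * (0 < y j)%N%:R * (f (incv (decv y j) k) - f y))) /=.
rewrite -big_split /=; congr (_ + _); apply: eq_bigr => j _.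
rewrite [RHS]mulrDr [in RHS]mulr_sumr; congr (_ + _); first ring.
by apply: eq_bigr => k _; ring.
Qed.

End Generator.

Lemma incv_decv d (y : Nvec d) j : (0 < y j)%N -> incv (decv y j) j = y.
Proof. by move=> y_gt0; apply/ffunP => l; rewrite !ffunE; case: (eqVneq l j) => [->|] /=; lia. Qed.

Section ExponentialTestFunctions.
Variables (R : realType) (d : nat) (g : 'I_d -> R).

Lemma fexp_incv y k : fexp g (incv y k) = fexp g y * expR (g k).
Proof.
have dot_delta : \sum_l g l * (l == k)%:R = g k.
  by rewrite (bigD1 k) //= eqxx mulr1 big1 ?addr0 // => l /negbTE ->; rewrite mulr0.
rewrite /fexp -expRD -dot_delta -big_split /=; congr expR.
by apply: eq_bigr => l _; rewrite ffunE natrD mulrDr.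
Qed.

Lemma fexp_decv (y : Nvec d) j : (0 < y j)%N -> fexp g (decv y j) = fexp g y / expR (g j).
Proof. by move=> y_gt0; rewrite -{2}(incv_decv y_gt0) fexp_incv mulfK // gt_eqF // expR_gt0. Qed.

Variables (lam mu : 'I_d -> R) (P : 'M[R]_d).
Hypothesis P_diag0 : forall i, P i i = 0.

Lemma gen_fexp y : gen (qrate lam mu P) (fexp g) y = fexp g y *
  (\sum_k lam k * (expR (g k) - 1) +
   \sum_j (0 < y j)%N%:R * mu j * (p0 P j * ((expR (g j))^-1 - 1) +
                                  \sum_k P j k * (expR (g k) / expR (g j) - 1))).
Proof.
rewrite gen_qrate // mulrDr !mulr_sumr; congr (_ + _).
  by apply: eq_bigr => k _; rewrite fexp_incv; ring.
apply: eq_bigr => j _; case: (ltnP 0 (y j)) => [y_gt0|]; last by rewrite !mul0r mulr0.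
rewrite fexp_decv //; under eq_bigr do rewrite fexp_incv fexp_decv //.
rewrite [RHS]mulrCA [in RHS]mulrDr [in RHS]mulr_sumr; congr (_ * (_ + _)); first ring.
by apply: eq_bigr => k _; ring.
Qed.

End ExponentialTestFunctions.

Lemma departure_balance (R : realType) d (P : 'M[R]_d) (w : 'I_d -> R) c j :
  1 + w j * c != 0 ->
  p0 P j * ((1 + w j * c)^-1 - 1) + \sum_k P j k * ((1 + w k * c) / (1 + w j * c) - 1) =
  c * (\sum_k P j k * w k - w j) / (1 + w j * c).
Proof.
move=> a_neq0; set a := 1 + w j * c.
have -> : \sum_k P j k * ((1 + w k * c) / a - 1) =
          (a^-1 - 1) * \sum_k P j k + c / a * \sum_k P j k * w k.
  rewrite !mulr_sumr -big_split /=; apply: eq_bigr => k _; ring.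
rewrite /p0 /a; field; exact: a_neq0.
Qed.

Section HarmonicAwayFromState.
Variables (R : realType) (d : nat) (P : 'M[R]_d) (i : 'I_d) (w : 'I_d -> R).
Hypotheses (w_i : w i = 1) (w_harmonic : forall k, k != i -> w k = \sum_l P k l * w l).

Lemma traffic_sum_harmonic (lam nu : 'I_d -> R) :
  (forall j, nu j = lam j + \sum_k nu k * P k j) ->
  \sum_k lam k * w k = (1 - \sum_k P i k * w k) * nu i.
Proof.
move=> traffic.
have lamE k : lam k = nu k - \sum_j nu j * P j k by rewrite {1}traffic addrK.
under eq_bigr do rewrite lamE mulrBl mulr_suml.
rewrite sumrB exchange_big -sumrB /=.
under eq_bigr do (under eq_bigr do rewrite -mulrA; rewrite -mulr_sumr -mulrBr).
rewrite (bigD1 i) //= [X in _ + X]big1 ?addr0 => [|j ji]; last first.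
  by rewrite -w_harmonic // subrr mulr0.
by rewrite w_i mulrC.
Qed.

(* [(1 - P) w] vanishes off [i], so [w = G (1 - P) w] gives [w i = G i i * ((1 - P) w) i]. *)
Lemma Gmx_diag_harmonic : (1%:M - P) \in unitmx ->
  Gmx P i i * (1 - \sum_k P i k * w k) = 1.
Proof.
move=> IP_unit.
have IPw j : \sum_k (1%:M - P) j k * w k = (j == i)%:R * (1 - \sum_k P i k * w k).
  under eq_bigr do rewrite !mxE mulrBl.
  rewrite sumrB (bigD1 j) //= eqxx mul1r big1 ?addr0 => [|k /negbTE]; last first.
    by rewrite eq_sym => ->; rewrite mul0r.
  have [->|ji] := eqVneq j i; first by rewrite mul1r w_i.
  by rewrite mul0r -w_harmonic // subrr.
have := congr1 (fun M : 'M[R]_d => \sum_k M i k * w k) (mulVmx IP_unit).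
rewrite /= -[Gmx P]/(invmx _); under eq_bigr do rewrite mxE mulr_suml.
rewrite exchange_big /=; under eq_bigr do (under eq_bigr do rewrite -mulrA; rewrite -mulr_sumr IPw).
rewrite (bigD1 i) //= [X in _ + X]big1 ?addr0 => [|j ji]; last by rewrite (negbTE ji) mul0r mulr0.
rewrite eqxx mul1r => ->.
rewrite (bigD1 i) //= [X in _ + X]big1 ?addr0 ?mxE ?eqxx ?mul1r // => k ki.
by rewrite !mxE eq_sym (negbTE ki) mul0r.
Qed.

End HarmonicAwayFromState.

Unset Implicit Arguments.

Theorem lemma5p1 (R : realType) (d : nat) (lam mu : 'I_d -> R) (P : 'M[R]_d)
  (hlam : forall i, 0 <= lam i) (hmu : forall i, 0 < mu i)
  (hP : forall i j, 0 <= P i j) (hPii : forall i, P i i = 0)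
  (hrow : forall i, \sum_(j < d) P i j <= 1)
  (hA : irreducibleZ (qrate lam mu P))
  (nu : 'I_d -> R) (hnu : forall j, nu j = lam j + \sum_(i < d) nu i * P i j)
  (gamma : 'I_d -> R) (hgamma : forall k, 0 <= gamma k)
  (i : 'I_d) (x : Nvec d) :
  gen (qrate lam mu P) (fexp (gvec P gamma i)) x =
  gamma i / Gmx P i i *
    (nu i - (if (0 < x i)%N then mu i / (1 + gamma i) else 0)) *
    fexp (gvec P gamma i) x.
Proof.
set c := gamma i; pose w k := Qhit P k i; pose K := \sum_k P i k * w k.
have w_i : w i = 1 := Qhit_refl P i.
have w_harmonic k : k != i -> w k = \sum_l P k l * w l := Qhit_harmonic hP hrow (j := k).
have a_gt0 k : 0 < 1 + w k * c.
  by apply: (lt_le_trans ltr01); rewrite lerDl mulr_ge0 ?hgamma //; exact: Qhit_ge0.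
have expg k : expR (gvec P gamma i k) = 1 + w k * c by rewrite /gvec lnK // posrE; exact: a_gt0.
have G_escape := Gmx_diag_harmonic w_i w_harmonic (unitmx_IsubP hP hrow hA).
have escape_neq0 : 1 - K != 0.
  by apply: contra_eq_neq G_escape => ->; rewrite mulr0 eq_sym oner_neq0.
have -> : Gmx P i i = (1 - K)^-1 by apply: (mulIf escape_neq0); rewrite G_escape mulVf.
rewrite gen_fexp //; under eq_bigr do rewrite expg addrAC subrr add0r mulrA.
under [in X in _ + X]eq_bigr => j _.
  under eq_bigr do rewrite !expg.
  rewrite expg departure_balance ?gt_eqF //; over.
rewrite -mulr_suml (traffic_sum_harmonic w_i w_harmonic hnu) -/K.
rewrite (bigD1 i) //= [\sum_(j | j != i) _]big1 => [|j ji]; last first.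
  by rewrite -w_harmonic // subrr !mulr0 mul0r mulr0.
have one_c_neq0 : 1 + c != 0 by have := a_gt0 i; rewrite w_i mul1r => /gt_eqF ->.
by rewrite w_i mul1r addr0 -/K; case: (0 < x i)%N => /=; field; rewrite ?one_c_neq0 ?escape_neq0.
Qed.
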